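(* Let $\mathcal{C}$ be a covering of a finite set $E$ such that the distinct indiscernible neighborhoods $I(x_1),\dots,I(x_s)$ form a partition of $E$, and let $M(E,\mathcal{I}_{SH}(\mathcal{C}))$ be the matroid whose closure operator is $SH$. Then: (1) $X$ is a base of this matroid if and only if $|X\cap I(x_i)|=1$ for all $i\in\{1,\dots,s\}$; moreover the matroid has exactly $|I(x_1)||I(x_2)|\cdots|I(x_s)|$ bases. (2) For all $X\subseteq E$, its rank is $r_{SH}(X)=|\{I(x_i):I(x_i)\cap X\neq\emptyset,\ i=1,\dots,s\}|$. (3) $X$ is dependent if and only if there exists $i$ with $|I(x_i)\cap X|>1$. (4) $X$ is a circuit if and only if there exists $i$ with $X\subseteq I(x_i)$ and $|X|=2$.
   Context: A covering of $E$ is a family of nonempty subsets of $E$ with union $E$. $I(x)=\bigcup\{K\in\mathcal{C}:x\in K\}$ and $SH(X)=\bigcup\{K\in\mathcal{C}:K\cap X\neq\emptyset\}$. Under the partition hypothesis $SH$ is the closure operator of a matroid on $E$ with independent sets $\mathcal{I}_{SH}(\mathcal{C})=\{I\subseteq E:x\notin SH(I-\{x\})\ \forall x\in I\}$. A base is a maximal independent set, a circuit a minimal dependent set, and the rank of $X$ is the maximum size of an independent subset of $X$. *)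

(* The finite ground set E is the whole finite type T. *)
From mathcomp Require Import all_boot.
Set Implicit Arguments. Unset Strict Implicit. Unset Printing Implicit Defensive.

Section Covering.
Variable T : finType.

Definition is_covering (C : {set {set T}}) : Prop :=
  (forall K, K \in C -> K != set0) /\ cover C = [set: T].

Definition Ind (C : {set {set T}}) (x : T) : {set T} :=
  \bigcup_(K in C | x \in K) K.

Definition SH (C : {set {set T}}) (X : {set T}) : {set T} :=
  \bigcup_(K in C | K :&: X != set0) K.

Definition Inds (C : {set {set T}}) : {set {set T}} := [set Ind C x | x : T].

Definition partition_hyp (C : {set {set T}}) : Prop :=
  partition (Inds C) [set: T].

Definition indepSH (C : {set {set T}}) (I : {set T}) : bool :=
  [forall x in I, x \notin SH C (I :\ x)].

Definition baseSH (C : {set {set T}}) (X : {set T}) : bool :=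
  maxset (indepSH C) X.

Definition circuitSH (C : {set {set T}}) (X : {set T}) : bool :=
  minset (fun Y => ~~ indepSH C Y) X.

Definition rankSH (C : {set {set T}}) (X : {set T}) : nat :=
  \max_(Y : {set T} | (Y \subset X) && indepSH C Y) #|Y|.

End Covering.

From mathcomp Require Import all_boot.
Set Implicit Arguments. Unset Strict Implicit. Unset Printing Implicit Defensive.

(* For any covering, x lies in SH(Y) iff Y meets I(x).  Under the partition
   hypothesis I(x) is the block of x, so Y is SH-independent iff it meets every
   block in at most one point: the matroid is the partition matroid of the
   blocks I(x_i), each of rank one. *)

Lemma injective_section (aT rT : finType) (f : aT -> rT) (X : {set aT}) :
  exists Y : {set aT}, [/\ Y \subset X, {in Y &, injective f} & #|Y| = #|f @: X|].
Proof.
pose Y := [set x in X | [pick y in X | f y == f x] == Some x].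
have sYX : Y \subset X by apply/subsetP => x /setIdP[].
have injY : {in Y &, injective f}.
  move=> x y /setIdP[_ /eqP pick_x] /setIdP[_ /eqP pick_y] fxy.
  by move: pick_x; rewrite fxy pick_y => -[].
exists Y; split=> //; rewrite -(card_in_imset injY).
suff -> : f @: Y = f @: X by [].
apply/eqP; rewrite eqEsubset imsetS //=; apply/subsetP => _ /imsetP[x xX ->].
case pick_x: [pick y in X | f y == f x] / pickP => [y /andP[yX /eqP fyx] | nox].
  by apply/imsetP; exists y => //; apply/setIdP; rewrite fyx pick_x.
by move: (nox x); rewrite /= xX eqxx.
Qed.

Definition ptransversal (T : finType) (P : {set {set T}}) (Y : {set T}) : bool :=
  [forall B in P, #|B :&: Y| <= 1].

Section PartitionMatroid.
Variables (T : finType) (P : {set {set T}}).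
Hypothesis partP : partition P [set: T].

Let tiP : trivIset P. Proof. by case/and3P: partP. Qed.

Lemma mem_pblockT x : x \in pblock P x.
Proof. by rewrite mem_pblock (cover_partition partP). Qed.

Lemma pblock_memT x : pblock P x \in P.
Proof. by rewrite pblock_mem ?(cover_partition partP). Qed.

Lemma ptransversalP (Y : {set T}) :
  reflect {in Y &, injective (pblock P)} (ptransversal P Y).
Proof.
apply: (iffP forall_inP) => [le1 x y xY yY exy | injY B PB].
  have /card_le1P/(_ x) := le1 _ (pblock_memT x).
  rewrite !inE mem_pblockT xY => /(_ isT y).
  by rewrite inE exy mem_pblockT yY => /esym/eqP.
apply/card_le1P => x /setIP[xB xY] y; rewrite !inE.
apply/andP/eqP => [[yB yY] | ->] //; apply: injY => //.
by rewrite !(def_pblock tiP PB).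
Qed.

Lemma ptransversalPn (Y : {set T}) :
  reflect (exists2 B, B \in P & 1 < #|B :&: Y|) (~~ ptransversal P Y).
Proof.
rewrite negb_forall_in; apply: (iffP exists_inP) => -[B PB].
  by rewrite -ltnNge; exists B.
by exists B; rewrite // -ltnNge.
Qed.

Lemma ptransversalU1 (X : {set T}) z :
  ptransversal P X -> [disjoint pblock P z & X] -> ptransversal P (z |: X).
Proof.
move=> /ptransversalP injX zX; apply/ptransversalP.
have pblock_zX x : x \in X -> pblock P x != pblock P z.
  move=> xX; rewrite eq_sym eq_pblock ?(cover_partition partP) //.
  by rewrite (disjointFl zX xX).
move=> x y /setU1P[-> | xX] /setU1P[-> | yX] exy //; last exact: injX.
  by move: (pblock_zX y yX); rewrite exy eqxx.
by move: (pblock_zX x xX); rewrite exy eqxx.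
Qed.

Lemma maxset_ptransversalP (X : {set T}) :
  reflect (forall B, B \in P -> #|X :&: B| = 1) (maxset (ptransversal P) X).
Proof.
apply: (iffP maxsetP) => [[trX maxX] B PB | meet1].
  have : #|X :&: B| <= 1 by rewrite setIC; apply: (forall_inP trX).
  rewrite leq_eqVlt ltnS leqn0 => /orP[/eqP // | /eqP/cards0_eq XB0].
  have /set0Pn[z zB] : B != set0 by apply: contraTneq PB => ->; case/and3P: partP.
  have Bz : pblock P z = B := def_pblock tiP PB zB.
  have zX : z \in X.
    rewrite -(maxX (z |: X)) ?subsetUr ?setU11 // ptransversalU1 //.
    by rewrite Bz -setI_eq0 setIC XB0.
  by move: (in_set0 z); rewrite -XB0 inE zX zB.
split=> [|Y /ptransversalP injY sXY].
  by apply/forall_inP => B PB; rewrite setIC meet1.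
apply/eqP; rewrite eqEsubset sXY andbT; apply/subsetP => y yY.
have /card_gt0P[x /setIP[xX xBy]] : 0 < #|X :&: pblock P y|.
  by rewrite meet1 ?pblock_memT.
suff -> : y = x by [].
by apply: injY; rewrite ?(subsetP sXY x) // (def_pblock tiP (pblock_memT y) xBy).
Qed.

Lemma pblock_imset (X : {set T}) :
  pblock P @: X = [set B in P | B :&: X != set0].
Proof.
apply/setP => B; rewrite inE; apply/imsetP/andP => [[x xX ->] | [PB]].
  split; first exact: pblock_memT.
  by apply/set0Pn; exists x; rewrite inE mem_pblockT.
by case/set0Pn => x /setIP[xB xX]; exists x; rewrite ?(def_pblock tiP PB).
Qed.

Lemma max_ptransversal_card (X : {set T}) :
  \max_(Y : {set T} | (Y \subset X) && ptransversal P Y) #|Y|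
    = #|[set B in P | B :&: X != set0]|.
Proof.
rewrite -pblock_imset; apply/eqP; rewrite eqn_leq; apply/andP; split.
  apply/bigmax_leqP => Y /andP[sYX /ptransversalP injY].
  by rewrite -(card_in_imset injY) subset_leq_card ?imsetS.
have [Y [sYX injY <-]] := injective_section (pblock P) X.
by apply: leq_bigmax_cond; rewrite sYX; apply/ptransversalP.
Qed.

Lemma ptransversal_pairPn B x y :
  B \in P -> x \in B -> y \in B -> x != y -> ~~ ptransversal P [set x; y].
Proof.
move=> PB xB yB xy; apply/ptransversalPn; exists B => //.
have /setIidPr -> : [set x; y] \subset B by rewrite subUset !sub1set xB yB.
by rewrite cards2 xy.
Qed.

Lemma minset_ptransversalP (X : {set T}) :
  reflect (exists2 B, B \in P & (X \subset B) && (#|X| == 2))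
          (minset (fun Y => ~~ ptransversal P Y) X).
Proof.
apply: (iffP minsetP) => [[/ptransversalPn[B PB] ltBX minX] | [B PB]].
  have [x [y [/setIP[xB xX] /setIP[yB yX] xy]]] := card_gt1P ltBX.
  have <- : [set x; y] = X.
    apply: minX; first exact: ptransversal_pairPn PB xB yB xy.
    by rewrite subUset !sub1set xX yX.
  by exists B; rewrite // subUset !sub1set xB yB cards2 xy.
case/andP=> sXB /eqP X2; have [x [y [xy defX]]] := cards2P _ (introT eqP X2).
have /andP[xB yB] : (x \in B) && (y \in B) by rewrite -!sub1set -subUset -defX.
split=> [|Y /ptransversalPn[B' _ ltB'Y] sYX].
  by rewrite defX (ptransversal_pairPn PB).
apply/eqP; rewrite eqEcard sYX X2 /=.
exact: leq_trans ltB'Y (subset_leq_card (subsetIr _ _)).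
Qed.

Lemma card_maxset_ptransversal :
  #|[set X : {set T} | maxset (ptransversal P) X]| = \prod_(B in P) #|B|.
Proof.
pose cut (X : {set T}) := [ffun B => if B \in P then X :&: B else set0].
pose singletons (B : {set T}) := [set [set x] | x in B].
have cut_inj : injective cut.
  have cutK X : \bigcup_(B in P) cut X B = X.
    apply/setP => x; apply/bigcupP/idP => [[B PB] | xX].
      by rewrite /cut ffunE PB => /setIP[].
    exists (pblock P x); first exact: pblock_memT.
    by rewrite /cut ffunE pblock_memT inE xX mem_pblockT.
  by move=> X Y eqXY; rewrite -(cutK X) -(cutK Y) eqXY.
(* A transversal is determined by its traces on the blocks, which are
   exactly the choices of one singleton inside each block. *)
rewrite -(card_imset _ cut_inj).
have -> : cut @: [set X | maxset (ptransversal P) X]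
          = [set f in pfamily set0 P singletons].
  apply/setP => f; rewrite inE; apply/imsetP/familyP => [[X + ->] B | fam_f].
    rewrite inE => /maxset_ptransversalP meet1; rewrite /cut ffunE.
    case: ifP => PB; last by rewrite inE.
    have /cards1P[x defXB] : #|X :&: B| == 1 by rewrite meet1.
    have /setIP[_ xB] : x \in X :&: B by rewrite defXB set11.
    by rewrite defXB [_ \in _]imset_f.
  pose X := \bigcup_(B in P) f B.
  have fB B : B \in P -> exists2 x, x \in B & f B = [set x].
    by move=> PB; have := fam_f B; rewrite PB => /imsetP.
  have traceX B : B \in P -> X :&: B = f B.
    move=> PB; apply/setP => w; rewrite inE; apply/andP/idP.
      case=> /bigcupP[B' PB' wfB'] wB; have [x' x'B' fB'] := fB B' PB'.
      have wB' : w \in B' by move: wfB'; rewrite fB' => /set1P->.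
      by rewrite -(def_pblock tiP PB wB) (def_pblock tiP PB' wB').
    move=> wfB; split; first by apply/bigcupP; exists B.
    by have [x xB fBx] := fB B PB; move: wfB; rewrite fBx => /set1P->.
  exists X.
    rewrite inE; apply/maxset_ptransversalP => B PB.
    by rewrite traceX //; have [x _ ->] := fB B PB; apply: cards1.
  apply/ffunP => B; rewrite /cut ffunE; case: ifPn => [PB | PBn]; first by rewrite traceX.
  by have := fam_f B; rewrite (negbTE PBn) inE => /eqP.
rewrite cardsE card_pfamily foldrE big_map big_enum /=.
by apply: eq_bigr => B _; rewrite card_imset //; apply: set1_inj.
Qed.
End PartitionMatroid.

Section Covering.
Variables (T : finType) (C : {set {set T}}).

Lemma mem_SH (Y : {set T}) x : (x \in SH C Y) = (Ind C x :&: Y != set0).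
Proof.
apply/bigcupP/set0Pn => [[K /andP[CK /set0Pn[y /setIP[yK yY]]] xK] | [y /setIP[]]].
  by exists y; rewrite inE yY andbT; apply/bigcupP; exists K; rewrite ?CK.
case/bigcupP => K /andP[CK xK] yK yY; exists K => //.
by rewrite CK; apply/set0Pn; exists y; apply/setIP.
Qed.

Hypotheses (covC : is_covering C) (partC : partition_hyp C).

Lemma mem_Ind x : x \in Ind C x.
Proof.
have /bigcupP[K CK xK] : x \in cover C by rewrite covC.2 inE.
by apply/bigcupP; exists K; rewrite ?CK.
Qed.

Lemma Ind_pblock x : Ind C x = pblock (Inds C) x.
Proof.
by apply/esym/def_pblock; [case/and3P: partC | apply: imset_f | apply: mem_Ind].
Qed.

Lemma indepSH_ptransversal : indepSH C =1 ptransversal (Inds C).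
Proof.
move=> Y; apply/forall_inP/(ptransversalP partC) => [indepY x y xY yY exy | injY x xY].
  apply/eqP; apply: contraNT (indepY x xY) => xy; rewrite mem_SH Ind_pblock.
  by apply/set0Pn; exists y; rewrite inE exy mem_pblockT // in_setD1 eq_sym xy yY.
rewrite mem_SH Ind_pblock; apply/set0Pn => -[y /setIP[yx /setD1P[yNx yY]]].
by case/eqP: yNx; apply: injY; rewrite // (same_pblock _ yx) //; case/and3P: partC.
Qed.
End Covering.

Theorem proposition12 (T : finType) (C : {set {set T}}) :
  is_covering C -> partition_hyp C ->
  (* (1) *)
  ((forall X : {set T},
      baseSH C X <-> (forall B, B \in Inds C -> #|X :&: B| = 1)) /\
   #|[set X : {set T} | baseSH C X]| = \prod_(B in Inds C) #|B|) /\
  (* (2) *)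
  (forall X : {set T},
      rankSH C X = #|[set B in Inds C | B :&: X != set0]|) /\
  (* (3) *)
  (forall X : {set T},
      ~~ indepSH C X <-> (exists2 B, B \in Inds C & 1 < #|B :&: X|)) /\
  (* (4) *)
  (forall X : {set T},
      circuitSH C X <-> (exists2 B, B \in Inds C & (X \subset B) && (#|X| == 2))).
Proof.
move=> covC partC; have indepE := indepSH_ptransversal covC partC.
have baseE X : baseSH C X = maxset (ptransversal (Inds C)) X := maxset_eq X indepE.
have circuitE X : circuitSH C X = minset (fun Y => ~~ ptransversal (Inds C) Y) X.
  by apply: minset_eq => Y; rewrite indepE.
split; [split | split; [|split]] => [X | | X | X | X].
- by rewrite baseE; apply: iff_sym; apply: rwP; apply: maxset_ptransversalP.
- by rewrite -card_maxset_ptransversal //; apply: eq_card => X; rewrite !inE baseE.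
- by rewrite -max_ptransversal_card //; apply: eq_bigl => Y; rewrite indepE.
- by rewrite indepE; apply: iff_sym; apply: rwP; apply: ptransversalPn.
- by rewrite circuitE; apply: iff_sym; apply: rwP; apply: minset_ptransversalP.
Qed.
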